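(* Let $q$ be a prime power with $q\equiv 1 \pmod 3$, let $\delta\in\mathbb{F}_q$ be a cubic nonresidue, and let $\mathbb{F}_q(\delta^{1/3})$ be the cubic extension of $\mathbb{F}_q$ obtained by adjoining a cube root $\delta^{1/3}$ of $\delta$, with $\mathbb{F}_q$-basis $\{1,\delta^{1/3},\delta^{2/3}\}$. Writing $\alpha=\alpha_1+\alpha_2\delta^{1/3}+\alpha_3\delta^{2/3}$ with $\alpha_i\in\mathbb{F}_q$, define \[\mathbb{H}_q=\left\{(\alpha,\beta)\in \mathbb{F}_q(\delta^{1/3})\times \mathbb{F}_q(\delta^{1/3}) : \alpha_2\beta_3-\alpha_3\beta_2\neq 0\right\}.\] Then the rule \[ \begin{bmatrix} a & b & c\\ d & e & f\\ r & s & t \end{bmatrix} (\alpha,\beta) = \left(\frac{a\alpha+b\beta+c}{r\alpha+s\beta+t}, \frac{d\alpha+e\beta+f}{r\alpha+s\beta+t} \right) \] is well defined for every matrix in $\mathrm{GL}_3(\mathbb{F}_q)$ and every $(\alpha,\beta)\in\mathbb{H}_q$ (i.e. the denominator is nonzero and the image lies in $\mathbb{H}_q$), and it defines a (left) group action of $\mathrm{GL}_3(\mathbb{F}_q)$ on $\mathbb{H}_q$.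
   Context: $\mathrm{GL}_3(\mathbb{F}_q)$ is the group of invertible $3\times 3$ matrices over the finite field $\mathbb{F}_q$. A cubic nonresidue is an element of $\mathbb{F}_q^\times$ that is not a cube in $\mathbb{F}_q$. *)

From HB Require Import structures.
From mathcomp Require Import all_boot all_order all_algebra all_field.
Set Implicit Arguments. Unset Strict Implicit. Unset Printing Implicit Defensive.
Import GRing.Theory.
Local Open Scope ring_scope.

(* L is a field extension of the finite field F, w a cube root of delta in L,
   and (1, w, w^2) is an F-basis of L, i.e. L = F(delta^{1/3}). *)

Definition cbasis (F : fieldType) (L : fieldExtType F) (w : L) : 3.-tuple L :=
  [tuple 1; w; w ^+ 2].

(* alpha_i = i-th coordinate of alpha in the basis (1, w, w^2),
   so alpha = alpha_1 + alpha_2 w + alpha_3 w^2 ; here indices 0,1,2 *)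
Definition cco (F : fieldType) (L : fieldExtType F) (w : L) (i : 'I_3) (a : L) : F :=
  coord (cbasis w) i a.

Definition inH (F : fieldType) (L : fieldExtType F) (w : L) (x : L * L) : bool :=
  cco w 1 x.1 * cco w 2 x.2 - cco w 2 x.1 * cco w 1 x.2 != 0.

Definition pgl_den (F : fieldType) (L : fieldExtType F) (M : 'M[F]_3) (x : L * L) : L :=
  M 2%R 0%R *: x.1 + M 2%R 1%R *: x.2 + (M 2%R 2%R)%:A.

Definition pgl_act (F : fieldType) (L : fieldExtType F) (M : 'M[F]_3) (x : L * L) : L * L :=
  ((M 0%R 0%R *: x.1 + M 0%R 1%R *: x.2 + (M 0%R 2%R)%:A) / pgl_den M x,
   (M 1%R 0%R *: x.1 + M 1%R 1%R *: x.2 + (M 1%R 2%R)%:A) / pgl_den M x).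

From HB Require Import structures.
From mathcomp Require Import all_boot all_order all_algebra all_field.
From mathcomp Require Import ring.

(* Write (alpha, beta) in homogeneous coordinates as (alpha : beta : 1).  The
   condition defining H_q says exactly that 1, alpha, beta are linearly
   independent over F: the matrix of their coordinates in the basis
   (1, w, w^2) has determinant alpha_2 beta_3 - alpha_3 beta_2.  The rule is
   the projective action of M on (alpha : beta : 1), and a linear relation u
   among the coordinates of M (alpha : beta : 1) is the relation u M among
   those of (alpha : beta : 1).  Hence an invertible M preserves independence;
   in particular the denominator, the relation given by the last row of M,
   does not vanish.  Only the basis property of (1, w, w^2) is used: the
   hypotheses on q and delta just guarantee that such a w exists. *)

Set Implicit Arguments.
Unset Strict Implicit.
Unset Printing Implicit Defensive.

Import GRing.Theory.
Local Open Scope ring_scope.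

Lemma sum_ord3 (V : nmodType) (f : 'I_3 -> V) : \sum_i f i = f 0 + f 1 + f 2.
Proof.
rewrite !big_ord_recr big_ord0 /= add0r.
by congr (f _ + f _ + f _); apply: val_inj.
Qed.

Lemma row_unitmx_neq0 (F : fieldType) n (M : 'M[F]_n) i :
  M \in unitmx -> row i M != 0.
Proof.
move=> M_unit; apply/eqP => /(congr1 (mulmx^~ (invmx M))).
rewrite rowE -mulmxA mulmxV // mulmx1 mul0mx => /matrixP/(_ 0 i)/eqP.
by rewrite !mxE !eqxx oner_eq0.
Qed.

Section HomogeneousCoordinates.
Variables (F : fieldType) (L : fieldExtType F).
Implicit Types (M N : 'M[F]_3) (x : L * L) (u : 'rV[F]_3).

Definition hdot u x : L := u 0 0 *: x.1 + u 0 1 *: x.2 + (u 0 2)%:A.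

Definition hfree x : Prop := forall u, hdot u x = 0 -> u = 0.

Lemma pgl_denE M x : pgl_den M x = hdot (row 2 M) x.
Proof. by rewrite /hdot !mxE. Qed.

Lemma pgl_actE M x :
  pgl_act M x = (hdot (row 0 M) x / pgl_den M x, hdot (row 1 M) x / pgl_den M x).
Proof. by rewrite /hdot !mxE. Qed.

Lemma hdot_pgl_act M x u : pgl_den M x != 0 ->
  hdot u (pgl_act M x) * pgl_den M x = hdot (u *m M) x.
Proof.
have sc (k : F) (y : L) : k *: y = in_alg L k * y by rewrite /= mulr_algl.
rewrite /hdot /pgl_act /pgl_den !mxE !sum_ord3 /= !sc !mulr1 => D_neq0.
by field.
Qed.

Lemma pgl_den_neq0 M x : M \in unitmx -> hfree x -> pgl_den M x != 0.
Proof.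
move=> M_unit x_free; rewrite pgl_denE.
exact: contra_neq (@x_free _) (row_unitmx_neq0 2 M_unit).
Qed.

Lemma hfree_pgl_act M x : M \in unitmx -> hfree x -> hfree (pgl_act M x).
Proof.
move=> M_unit x_free u /(congr1 ( *%R^~ (pgl_den M x))).
rewrite hdot_pgl_act ?pgl_den_neq0 // mul0r => /x_free/eqP.
by rewrite mulmx_free_eq0 ?row_free_unit // => /eqP.
Qed.

Lemma pgl_act1 x : pgl_act 1%:M x = x.
Proof.
case: x => a b; rewrite /pgl_act /pgl_den !mxE /=.
by rewrite !scale1r !scale0r !add0r !addr0 !divr1.
Qed.

Lemma pgl_actM M N x : pgl_den N x != 0 ->
  pgl_act (M *m N) x = pgl_act M (pgl_act N x).
Proof.
move=> DN_neq0; rewrite [LHS]pgl_actE [RHS]pgl_actE !pgl_denE !row_mul.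
have cancel_den (a b : L) : a * pgl_den N x / (b * pgl_den N x) = a / b.
  by rewrite invfM mulrACA divff // mulr1.
by rewrite -!hdot_pgl_act // !cancel_den.
Qed.

End HomogeneousCoordinates.

Section CubicBasis.
Variables (F : fieldType) (L : fieldExtType F) (w : L).
Hypothesis w_basis : basis_of fullv (cbasis w).
Implicit Types (x : L * L) (u : 'rV[F]_3).

Definition coord_mx x : 'M[F]_3 :=
  \matrix_(i, j) [:: cco w j x.1; cco w j x.2; (j == 0)%:R]`_i.

Lemma cco_hdot u x j : cco w j (hdot u x) = (u *m coord_mx x) 0 j.
Proof.
have cco1 : cco w j 1 = (j == 0)%:R.
  by rewrite /cco (coord_free 0 j (basis_free w_basis)) eq_sym.
by rewrite /hdot /cco !linearD !linearZ /= -/(cco w j 1) cco1 !mxE sum_ord3 !mxE.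
Qed.

Lemma hdot_eq0 u x : (hdot u x == 0) = (u *m coord_mx x == 0).
Proof.
apply/eqP/eqP => [ux0 | uC0].
  by apply/rowP => j; rewrite -cco_hdot ux0 /cco linear0 mxE.
rewrite (coord_basis w_basis (memvf (hdot u x))); apply: big1 => j _.
by rewrite -/(cco w j _) cco_hdot uC0 mxE scale0r.
Qed.

Lemma hfree_coord_mx x : hfree x <-> coord_mx x \in unitmx.
Proof.
split => [x_free | C_unit u /eqP].
  rewrite unitmxE unitfE; apply/det0P => -[u /eqP u_neq0 /eqP].
  by rewrite -hdot_eq0 => /eqP/x_free.
by rewrite hdot_eq0 mulmx_free_eq0 ?row_free_unit // => /eqP.
Qed.

Lemma det_coord_mx x :
  \det (coord_mx x) = cco w 1 x.1 * cco w 2 x.2 - cco w 2 x.1 * cco w 1 x.2.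
Proof.
rewrite (expand_det_row _ 2) sum_ord3 !mxE /= mul1r !mul0r !addr0.
rewrite /cofactor (expand_det_row _ 0) !big_ord_recl big_ord0 /cofactor !det_mx11 !mxE /=.
rewrite [X in (-1) ^+ X](_ : _ = 2%N) // -[bump 0 0]/1%N.
have -> : lift 0 ord0 = 1 :> 'I_3 by apply: val_inj.
(* also rewrites the convertible [lift 0 (lift ord0 ord0)] *)
have -> : lift 0 (lift ord0 0) = 2 :> 'I_3 by apply: val_inj.
have -> : lift 0 (lift (lift ord0 ord0) 0) = 1 :> 'I_3 by apply: val_inj.
ring.
Qed.

Lemma inHP x : inH w x <-> hfree x.
Proof. by rewrite hfree_coord_mx unitmxE unitfE det_coord_mx. Qed.

End CubicBasis.

Theorem lemma2p2 (F : finFieldType) (delta : F) (L : fieldExtType F) (w : L) :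
  (#|F| %% 3 = 1)%N ->
  delta != 0 ->
  ~ (exists y : F, y ^+ 3 = delta) ->
  w ^+ 3 = delta%:A ->
  basis_of fullv (cbasis w) ->
  (forall (M : 'M[F]_3) (x : L * L), M \in unitmx -> inH w x ->
      pgl_den M x != 0 /\ inH w (pgl_act M x))
  /\ (forall x : L * L, inH w x -> pgl_act 1%:M x = x)
  /\ (forall (M N : 'M[F]_3) (x : L * L), M \in unitmx -> N \in unitmx -> inH w x ->
      pgl_act (M *m N) x = pgl_act M (pgl_act N x)).
Proof.
move=> _ _ _ _ w_basis; split; [|split].
- move=> M x M_unit /(inHP w_basis) x_free.
  by split; [exact: pgl_den_neq0 | apply/(inHP w_basis); exact: hfree_pgl_act].
- by move=> x _; exact: pgl_act1.
- move=> M N x _ N_unit /(inHP w_basis) x_free.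
  exact/pgl_actM/pgl_den_neq0.
Qed.
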